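(* Fix all data of the risk-averse multistage and two-stage capacity planning models described in the context except the risk parameters $\lambda=(\lambda_2,\ldots,\lambda_T)\in[0,1]^{T-1}$ (the confidence levels $\alpha_t\in(0,1)$ are fixed), and write $z^{MS}_R(\lambda)$ and $z^{TS}_R(\lambda)$ for the optimal values of the multistage model and the two-stage model, respectively. Then both $z^{MS}_R$ and $z^{TS}_R$ increase as $\lambda$ increases: if $\lambda_t\le\hat\lambda_t$ for all $t=2,\ldots,T$, then $z^{MS}_R(\lambda)\le z^{MS}_R(\hat\lambda)$ and $z^{TS}_R(\lambda)\le z^{TS}_R(\hat\lambda)$.
   Context: Setting. Fix integers $T\ge 2$ (periods), $M\ge1$ (facilities), $N\ge1$ (customer sites). For each period $t$: maintenance costs $f_{ti}\ge 0$ ($i\in[M]$), forming $\boldsymbol f_t\in\mathbb R^M$; operational costs $c_{tij}\ge0$, forming $\boldsymbol c_t\in\mathbb R^{MN}$; capacities $h_{ti}>0$. Vectors $\boldsymbol y\in\mathbb R^{MN}$ are indexed by pairs $(i,j)$. $\boldsymbol A_t\in\mathbb R^{N\times MN}$ is the matrix with $(\boldsymbol A_t\boldsymbol y)_j=\sum_{i=1}^M y_{ij}$ and $\boldsymbol B_t\in\mathbb R^{M\times MN}$ the matrix with $(\boldsymbol B_t\boldsymbol y)_i=\frac1{h_{ti}}\sum_{j=1}^N y_{ij}$. Scenario tree: a finite rooted tree with node set $\mathcal T$ and root $1$, all root-to-leaf paths having $T$ nodes; $\mathcal T_t$ is the set of nodes at depth $t$ ($\mathcal T_1=\{1\}$),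 $t_n$ the period of node $n$, $\mathcal L=\mathcal T_T$ the leaves, $a(n)$ the parent of $n\ne1$, $\mathcal C(n)$ the set of children of $n$, $\mathcal P(n)$ the set of nodes on the path from the root to $n$ (inclusive). Each node has a probability $p_n>0$ with $\sum_{n\in\mathcal T_t}p_n=1$ for each $t$ and $\sum_{m\in\mathcal C(n)}p_m=p_n$ for $n\notin\mathcal L$, and a demand vector $\boldsymbol d_n\in\mathbb R^N_{\ge0}$. Risk parameters $\lambda_t\in[0,1]$, $\alpha_t\in(0,1)$, $t=2,\ldots,T$. Define $\tilde{\boldsymbol f}_n=\boldsymbol f_{t_n}$ if $n=1$ and $(1-\lambda_{t_n})\boldsymbol f_{t_n}$ otherwise; $\tilde{\boldsymbol c}_n=\boldsymbol c_{t_n}$ if $n=1$ and $(1-\lambda_{t_n})\boldsymbol c_{t_n}$ otherwise; $\tilde\lambda_n=0$ if $n\in\mathcal L$ and $\lambda_{t_n+1}$ otherwise; $\tilde\alpha_n=0$ if $n=1$ and $\lambda_{t_n}/(1-\alpha_{t_n})$ otherwise. Multistage model: $z^{MS}_R=\min\sum_{n\in\mathcal T}p_n\big(\tilde{\boldsymbol f}_n^{\mathsf T}\sum_{m\in\mathcal P(n)}\boldsymbol x_m+\tilde{\boldsymbol c}_n^{\mathsf T}\boldsymbol y_n+\tilde\lambda_n\eta_n+\tilde\alpha_nu_n\big)$ over $\boldsymbol x_n\in\mathbb Z^M_+$, $\boldsymbol y_n\in\mathbb R^{MN}_+$ ($n\in\mathcal T$), $\eta_n\in\mathbb R$ ($n\notin\mathcal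 L$), $u_n\ge0$ ($n\ne1$) (terms with $\eta_n$ for leaves and $u_1$ are absent), subject to $\boldsymbol A_{t_n}\boldsymbol y_n=\boldsymbol d_n$ and $\boldsymbol B_{t_n}\boldsymbol y_n\le\sum_{m\in\mathcal P(n)}\boldsymbol x_m$ for all $n\in\mathcal T$, and $u_n+\eta_{a(n)}\ge\boldsymbol f_{t_n}^{\mathsf T}\sum_{m\in\mathcal P(n)}\boldsymbol x_m+\boldsymbol c_{t_n}^{\mathsf T}\boldsymbol y_n$ for all $n\ne1$. Two-stage model: same as the multistage model with the additional constraints $\boldsymbol x_m=\boldsymbol x_n$ for all $m,n\in\mathcal T_t$, $t=1,\ldots,T$; its optimal value is $z^{TS}_R$. *)

From HB Require Import structures.
From mathcomp Require Import all_boot all_order all_algebra.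
From mathcomp Require Import all_classical all_reals ereal.
Set Implicit Arguments. Unset Strict Implicit. Unset Printing Implicit Defensive.
Import Order.TTheory GRing.Theory Num.Theory.
Local Open Scope ring_scope.
Local Open Scope classical_set_scope.

Section CapacityPlanning.
Variable R : realType.
Variable Nd : finType.

(* r = root, a = parent map (a r is irrelevant), tn = period (depth) of a node *)

Definition children (r : Nd) (a : Nd -> Nd) (n : Nd) : {set Nd} :=
  [set m | (m != r) && (a m == n)].

(* P(n): nodes on the root-to-n path (inclusive): n, a n, ..., a^(tn n - 1) n = root *)
Definition path_nodes (a : Nd -> Nd) (tn : Nd -> nat) (n : Nd) : {set Nd} :=
  [set m | [exists k : 'I_(tn n), iter k a n == m]].

Record scenario_tree (T : nat) (r : Nd) (a : Nd -> Nd) (tn : Nd -> nat) : Prop := {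
  st_root : tn r = 1%N;
  st_parent : forall n, n != r -> tn n = (tn (a n)).+1;
  st_range : forall n, (1 <= tn n <= T)%N;
  st_nonleaf : forall n, (tn n < T)%N -> exists m, m \in children r a n
}.

Record tree_probabilities (T : nat) (r : Nd) (a : Nd -> Nd) (tn : Nd -> nat)
    (p : Nd -> R) : Prop := {
  pr_pos : forall n, 0 < p n;
  pr_level : forall t, (1 <= t <= T)%N -> \sum_(n | tn n == t) p n = 1;
  pr_children : forall n, (tn n < T)%N -> \sum_(m in children r a n) p m = p n
}.

Variables (M K : nat).   (* K = number of customer sites (N in the paper) *)

Record solution := Sol {
  sx : Nd -> 'I_M -> nat;
  sy : Nd -> 'I_M -> 'I_K -> R;
  seta : Nd -> R;
  su : Nd -> R
}.

Variables (T : nat) (r : Nd) (a : Nd -> Nd) (tn : Nd -> nat).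
Variables (p : Nd -> R) (d : Nd -> 'I_K -> R).
Variables (f : nat -> 'I_M -> R) (c : nat -> 'I_M -> 'I_K -> R) (h : nat -> 'I_M -> R).

Definition cumx (s : solution) (n : Nd) (i : 'I_M) : R :=
  \sum_(m in path_nodes a tn n) (sx s m i)%:R.

Definition node_cost (s : solution) (n : Nd) : R :=
  \sum_(i < M) f (tn n) i * cumx s n i
  + \sum_(i < M) \sum_(j < K) c (tn n) i j * sy s n i j.

Definition ms_feasible (s : solution) : Prop :=
  [/\ forall n i j, 0 <= sy s n i j,
      forall n, n != r -> 0 <= su s n,
      forall n (j : 'I_K), \sum_(i < M) sy s n i j = d n j,
      (* B_{t_n} y_n <= sum_{m in P(n)} x_m *)
      forall n (i : 'I_M), (h (tn n) i)^-1 * \sum_(j < K) sy s n i j <= cumx s n i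
    & forall n, n != r -> node_cost s n <= su s n + seta s (a n)].

Definition ts_feasible (s : solution) : Prop :=
  ms_feasible s /\ forall m n, tn m = tn n -> sx s m = sx s n.

Variables (alpha : nat -> R).

(* objective for risk parameters lam (lam t for t = 2..T) *)
Definition tilde_f (lam : nat -> R) (n : Nd) (i : 'I_M) : R :=
  if n == r then f (tn n) i else (1 - lam (tn n)) * f (tn n) i.
Definition tilde_c (lam : nat -> R) (n : Nd) (i : 'I_M) (j : 'I_K) : R :=
  if n == r then c (tn n) i j else (1 - lam (tn n)) * c (tn n) i j.
Definition tilde_lam (lam : nat -> R) (n : Nd) : R :=
  if tn n == T then 0 else lam (tn n).+1.
Definition tilde_alpha (lam : nat -> R) (n : Nd) : R :=
  if n == r then 0 else lam (tn n) / (1 - alpha (tn n)).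

Definition objective (lam : nat -> R) (s : solution) : R :=
  \sum_(n : Nd) p n *
    ( \sum_(i < M) tilde_f lam n i * cumx s n i
    + \sum_(i < M) \sum_(j < K) tilde_c lam n i j * sy s n i j
    + tilde_lam lam n * seta s n
    + tilde_alpha lam n * su s n ).

Definition z_MS (lam : nat -> R) : \bar R :=
  ereal_inf [set (objective lam s)%:E | s in ms_feasible].
Definition z_TS (lam : nat -> R) : \bar R :=
  ereal_inf [set (objective lam s)%:E | s in ts_feasible].

End CapacityPlanning.

(* For a fixed feasible solution the objective is affine in the risk
   parameters, and raising every lambda_t to lambdahat_t changes it by
     sum_{n <> root} p_n (lambdahat_{t_n} - lambda_{t_n})
                     (eta_{a(n)} + u_n / (1 - alpha_{t_n}) - cost_n),
   where the eta-terms were moved from each node to its children using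
   sum_{m in C(n)} p_m = p_n.  Each bracket is nonnegative: the CVaR constraint
   gives cost_n <= u_n + eta_{a(n)}, and u_n <= u_n / (1 - alpha) since u_n >= 0.
   So the objective increases pointwise on the feasible sets, which do not
   depend on lambda, and so do both infima. *)

From HB Require Import structures.
From mathcomp Require Import all_boot all_order all_algebra.
From mathcomp Require Import all_classical all_reals ereal.
From mathcomp Require Import ring lra.
Set Implicit Arguments. Unset Strict Implicit. Unset Printing Implicit Defensive.
Import Order.TTheory GRing.Theory Num.Theory.
Local Open Scope ring_scope.

Lemma le_ereal_inf_image (R : realType) (U : Type) (A : set U) (g k : U -> \bar R) :
  (forall x, A x -> (g x <= k x)%E) ->
  (ereal_inf [set g x | x in A] <= ereal_inf [set k x | x in A])%E.
Proof.
move=> gk; apply: le_ereal_inf_tmp => _ [x Ax <-].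
apply: le_trans (gk x Ax); apply: ereal_inf_lbound; exact: imageP.
Qed.

Lemma sum_over_children (R : realType) (Nd : finType) (r : Nd) (a : Nd -> Nd)
    (G : Nd -> R) :
  \sum_n \sum_(m in children r a n) G m = \sum_(m | m != r) G m.
Proof.
rewrite (exchange_big_dep (fun m => m != r)) => [|n m _]; last first.
  by rewrite /children inE => /andP[].
apply: eq_bigr => m mr; rewrite (eq_bigl (pred1 (a m))) ?big_pred1_eq // => n.
by rewrite /children inE mr eq_sym.
Qed.

Section ScenarioTree.
Variables (R : realType) (Nd : finType) (T : nat).
Variables (r : Nd) (a : Nd -> Nd) (tn : Nd -> nat) (p : Nd -> R).
Hypothesis tree : scenario_tree T r a tn.
Hypothesis prob : tree_probabilities T r a tn p.

Lemma nonroot_period n : n != r -> (2 <= tn n <= T)%N.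
Proof.
move=> nr; have /andP[_ le_nT] := st_range tree n.
have /andP[ge_an1 _] := st_range tree (a n).
by rewrite le_nT andbT (st_parent tree nr) ltnS.
Qed.

Lemma tilde_lam_children (lam : nat -> R) (e : Nd -> R) n :
  p n * (tilde_lam T tn lam n * e n) =
  \sum_(m in children r a n) p m * lam (tn m) * e (a m).
Proof.
rewrite /tilde_lam; case: eqP => [nT | /eqP nT].
  rewrite mul0r mulr0 big_pred0 // => m; apply/negP.
  rewrite /children inE => /andP[mr /eqP amn].
  by have /andP[_] := st_range tree m; rewrite (st_parent tree mr) amn nT ltnn.
have lt_nT : (tn n < T)%N.
  by have /andP[_ le_nT] := st_range tree n; rewrite ltn_neqAle nT.
rewrite -(pr_children prob lt_nT) mulr_suml; apply: eq_bigr => m.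
by rewrite /children inE => /andP[mr /eqP amn]; rewrite (st_parent tree mr) amn mulrA.
Qed.

Lemma sum_tilde_lam (lam : nat -> R) (e : Nd -> R) :
  \sum_n p n * (tilde_lam T tn lam n * e n) =
  \sum_(n | n != r) p n * lam (tn n) * e (a n).
Proof.
by rewrite -(sum_over_children r a); apply: eq_bigr => n _; apply: tilde_lam_children.
Qed.

Variables (M K : nat) (d : Nd -> 'I_K -> R).
Variables (f : nat -> 'I_M -> R) (c : nat -> 'I_M -> 'I_K -> R) (h : nat -> 'I_M -> R).
Variable alpha : nat -> R.

Definition stage_weight (lam : nat -> R) n : R :=
  if n == r then 1 else 1 - lam (tn n).

Lemma sum_tilde_costs lam (s : solution R Nd M K) n :
  \sum_i tilde_f r tn f lam n i * cumx a tn s n i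
  + \sum_i \sum_j tilde_c r tn c lam n i j * sy s n i j
  = stage_weight lam n * node_cost a tn f c s n.
Proof.
rewrite /node_cost mulrDr !mulr_sumr; congr (_ + _).
  apply: eq_bigr => i _.
  by rewrite /tilde_f /stage_weight; case: ifP; rewrite ?mul1r ?mulrA.
apply: eq_bigr => i _; rewrite mulr_sumr; apply: eq_bigr => j _.
by rewrite /tilde_c /stage_weight; case: ifP; rewrite ?mul1r ?mulrA.
Qed.

Lemma objective_diff (lam lamh : nat -> R) (s : solution R Nd M K) :
  objective T r a tn p f c alpha lamh s - objective T r a tn p f c alpha lam s =
  \sum_(n | n != r) p n * (lamh (tn n) - lam (tn n)) *
    (seta s (a n) + su s n / (1 - alpha (tn n)) - node_cost a tn f c s n).
Proof.
pose dlam t := lamh t - lam t.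
pose local n := if n != r then
  p n * dlam (tn n) * (su s n / (1 - alpha (tn n)) - node_cost a tn f c s n) else 0.
have node_sub n :
  p n * (\sum_i tilde_f r tn f lamh n i * cumx a tn s n i
    + \sum_i \sum_j tilde_c r tn c lamh n i j * sy s n i j
    + tilde_lam T tn lamh n * seta s n + tilde_alpha r tn alpha lamh n * su s n)
  - p n * (\sum_i tilde_f r tn f lam n i * cumx a tn s n i
    + \sum_i \sum_j tilde_c r tn c lam n i j * sy s n i j
    + tilde_lam T tn lam n * seta s n + tilde_alpha r tn alpha lam n * su s n)
  = local n + p n * (tilde_lam T tn dlam n * seta s n).
  rewrite !sum_tilde_costs /local /stage_weight /tilde_lam /tilde_alpha /dlam.
  by case: eqP => _; case: eqP => _; rewrite /= ?mul0r; ring.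
rewrite -sumrB (eq_bigr _ (fun n _ => node_sub n)) big_split /= sum_tilde_lam.
rewrite /local -big_mkcond -big_split /=; apply: eq_bigr => n _.
by rewrite /dlam; ring.
Qed.

Lemma le_objective (lam lamh : nat -> R) (s : solution R Nd M K) :
  (forall t, (2 <= t <= T)%N -> 0 < alpha t < 1) ->
  (forall t, (2 <= t <= T)%N -> lam t <= lamh t) ->
  ms_feasible r a tn d f c h s ->
  objective T r a tn p f c alpha lam s <= objective T r a tn p f c alpha lamh s.
Proof.
move=> alpha01 lam_le [_ u_ge0 _ _ cvar].
rewrite -subr_ge0 objective_diff; apply: sumr_ge0 => n nr.
have period := nonroot_period nr.
have /andP[alpha_gt0 alpha_lt1] := alpha01 _ period.
have u_le : su s n <= su s n / (1 - alpha (tn n)).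
  rewrite ler_pdivlMr ?subr_gt0 // -[leRHS]mulr1 ler_wpM2l ?u_ge0 //.
  by rewrite lerBlDr lerDl ltW.
apply: mulr_ge0; first apply: mulr_ge0.
- exact: ltW (pr_pos prob n).
- by rewrite subr_ge0 lam_le.
- by have := cvar n nr; lra.
Qed.

End ScenarioTree.

Theorem proposition1 (R : realType) (Nd : finType) (M K T : nat)
  (r : Nd) (a : Nd -> Nd) (tn : Nd -> nat) (p : Nd -> R) (d : Nd -> 'I_K -> R)
  (f : nat -> 'I_M -> R) (c : nat -> 'I_M -> 'I_K -> R) (h : nat -> 'I_M -> R)
  (alpha lam lamh : nat -> R) :
  (2 <= T)%N -> (1 <= M)%N -> (1 <= K)%N ->
  scenario_tree T r a tn ->
  tree_probabilities T r a tn p ->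
  (forall n j, 0 <= d n j) ->
  (forall t i, (1 <= t <= T)%N -> 0 <= f t i) ->
  (forall t i j, (1 <= t <= T)%N -> 0 <= c t i j) ->
  (forall t i, (1 <= t <= T)%N -> 0 < h t i) ->
  (forall t, (2 <= t <= T)%N -> 0 < alpha t < 1) ->
  (forall t, (2 <= t <= T)%N -> 0 <= lam t <= 1) ->
  (forall t, (2 <= t <= T)%N -> 0 <= lamh t <= 1) ->
  (forall t, (2 <= t <= T)%N -> lam t <= lamh t) ->
  (z_MS T r a tn p d f c h alpha lam <= z_MS T r a tn p d f c h alpha lamh)%E /\
  (z_TS T r a tn p d f c h alpha lam <= z_TS T r a tn p d f c h alpha lamh)%E.
Proof.
move=> _ _ _ tree prob _ _ _ _ alpha01 _ _ lam_le.
have le_obj s : ms_feasible r a tn d f c h s ->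
    objective T r a tn p f c alpha lam s <= objective T r a tn p f c alpha lamh s.
  exact: (le_objective (p := p) tree prob alpha01 lam_le).
split; apply: le_ereal_inf_image => s; [move=> feas | move=> [feas _]].
  by rewrite lee_fin le_obj.
by rewrite lee_fin le_obj.
Qed.
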